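(* Let $g$ be a bounded, non-constant completely monotonic function on $(0,\infty)$. Then for all $x,y>0$, $$g(x)<\frac{(y/x)^y}{\Gamma(y)}\int_0^\infty g(t)\,t^{y-1}e^{-ty/x}\,dt.$$ *)

From Stdlib Require Import Reals.
From Coquelicot Require Import Coquelicot.
Open Scope R_scope.

Definition completely_monotonic (g : R -> R) : Prop :=
  forall (n : nat) (x : R), 0 < x ->
    ex_derive_n g n x /\ 0 <= (-1) ^ n * Derive_n g n x.

Definition bounded_on_pos (g : R -> R) : Prop :=
  exists M : R, forall x : R, 0 < x -> Rabs (g x) <= M.

Definition nonconstant_on_pos (g : R -> R) : Prop :=
  exists a b : R, 0 < a /\ 0 < b /\ g a <> g b.

Definition Gamma (y : R) : R :=
  RInt_gen (fun t => Rpower t (y - 1) * exp (- t)) (at_right 0) (Rbar_locally p_infty).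

From Stdlib Require Import Reals Lra Classical.
From Coquelicot Require Import Coquelicot.
Open Scope R_scope.

(* Put lam = y / x and w(t) = t^(y-1) e^(-lam t).  Substituting s = lam t in Euler's
   integral gives int_0^oo w = Gamma(y) / lam^y, and since t^y e^(-t) is a primitive of
   (y - t) t^(y-1) e^(-t) vanishing at 0 and oo, the probability density
   lam^y w / Gamma(y) has mean y / lam = x.  Complete monotonicity makes g convex, so g
   lies above its tangent at x, and integrating against this density gives Jensen's
   inequality g(x) <= lam^y / Gamma(y) int_0^oo g w.  It is strict because a bounded
   nonconstant g is not affine: the continuous nonnegative gap between g and its
   tangent is positive somewhere, and w > 0. *)

Local Notation is_RInt_0_oo f l :=
  (is_RInt_gen f (at_right 0) (Rbar_locally p_infty) l).

Lemma eventually_between_pos (P : R -> Prop) : (forall t, 0 < t -> P t) ->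
  filter_prod (at_right 0) (Rbar_locally p_infty)
    (fun ab => forall t, Rmin (fst ab) (snd ab) <= t <= Rmax (fst ab) (snd ab) -> P t).
Proof.
  intros HP. apply Filter_prod with (fun a => 0 < a) (fun b => 0 < b).
  - exists (mkposreal 1 Rlt_0_1). auto.
  - exists 0. auto.
  - intros a b Ha Hb t Ht; simpl in Ht. apply HP.
    assert (0 < Rmin a b) by now apply Rmin_glb_lt. lra.
Qed.

Lemma is_RInt_gen_ext_pos (f g : R -> R) l : (forall t, 0 < t -> f t = g t) ->
  is_RInt_0_oo f l -> is_RInt_0_oo g l.
Proof.
  intros Hfg. apply is_RInt_gen_ext.
  apply (filter_imp _ _ (fun ab Hab t Ht =>
           Hab t (conj (Rlt_le _ _ (proj1 Ht)) (Rlt_le _ _ (proj2 Ht))))).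
  now apply eventually_between_pos.
Qed.

Lemma is_RInt_gen_mult_l (f : R -> R) k l :
  is_RInt_0_oo f l -> is_RInt_0_oo (fun t => k * f t) (k * l).
Proof. exact (is_RInt_gen_scal f k l). Qed.

Lemma is_RInt_gen_Rplus (f g : R -> R) lf lg : is_RInt_0_oo f lf -> is_RInt_0_oo g lg ->
  is_RInt_0_oo (fun t => f t + g t) (lf + lg).
Proof. exact (is_RInt_gen_plus f g lf lg). Qed.

Lemma is_RInt_gen_scale (f : R -> R) l c : 0 < c -> is_RInt_0_oo f l ->
  is_RInt_0_oo (fun t => c * f (c * t)) l.
Proof.
  intros Hc Hf P HP.
  destruct (Hf P HP) as [Q S [d HQ] [M HS] HQS].
  apply Filter_prod with (fun a => Q (c * a)) (fun b => S (c * b)).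
  - exists (mkposreal (d / c) (Rdiv_lt_0_compat _ _ (cond_pos d) Hc)).
    intros a Ha Ha0. apply HQ; [| nra].
    change (Rabs (a - 0) < d / c) in Ha. change (Rabs (c * a - 0) < d).
    rewrite Rminus_0_r, Rabs_pos_eq in * by nra.
    apply (Rmult_lt_compat_l c) in Ha; [| lra].
    replace (c * (d / c)) with (pos d) in Ha by (field; lra). lra.
  - exists (M / c). intros b Hb. apply HS.
    apply (Rmult_lt_compat_l c) in Hb; [| lra].
    replace (c * (M / c)) with M in Hb by (field; lra). lra.
  - intros a b Ha Hb. destruct (HQS _ _ Ha Hb) as [v [Hv HPv]].
    exists v. split; [| exact HPv].
    simpl in *. apply is_RInt_ext with (fun t => scal c (f (c * t + 0))).
    + intros t _. now rewrite Rplus_0_r.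
    + rewrite <- (Rplus_0_r (c * a)), <- (Rplus_0_r (c * b)) in Hv.
      exact (is_RInt_comp_lin f c 0 a b v Hv).
Qed.

Lemma is_RInt_gen_approx (f : R -> R) l : is_RInt_0_oo f l ->
  forall (eps : posreal) a1 b1, 0 < a1 ->
  exists a b, 0 < a < a1 /\ b1 < b /\ Rabs (RInt f a b - l) < eps.
Proof.
  intros Hf eps a1 b1 Ha1.
  destruct (Hf (ball l eps) (locally_ball l eps)) as [Q S [d HQ] [M HS] HQS].
  set (a := Rmin a1 d / 2). set (b := Rmax b1 M + 1).
  assert (Hm : 0 < Rmin a1 d) by (apply Rmin_glb_lt; [lra | apply cond_pos]).
  pose proof (Rmin_l a1 d). pose proof (Rmin_r a1 d).
  pose proof (Rmax_l b1 M). pose proof (Rmax_r b1 M).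
  destruct (HQS a b) as [v [Hv Hball]].
  - apply HQ; [| unfold a; lra].
    change (Rabs (a - 0) < d). rewrite Rminus_0_r, Rabs_pos_eq; unfold a; lra.
  - apply HS. unfold b; lra.
  - exists a, b. split; [unfold a; lra |]. split; [unfold b; lra |].
    simpl in Hv. rewrite (is_RInt_unique _ _ _ _ Hv). exact Hball.
Qed.

Section NonnegativeIntegrand.

Variable f : R -> R.
Hypothesis f_cont : forall t, 0 < t -> continuous f t.

Lemma ex_RInt_pos a b : 0 < a -> 0 < b -> ex_RInt f a b.
Proof.
  intros Ha Hb. apply (ex_RInt_continuous (V := R_CompleteNormedModule)).
  intros t Ht. apply f_cont.
  assert (0 < Rmin a b) by now apply Rmin_glb_lt. lra.
Qed.

Hypothesis f_ge0 : forall t, 0 < t -> 0 <= f t.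

Lemma RInt_le_widen a' a b b' : 0 < a' -> a' <= a -> a <= b -> b <= b' ->
  RInt f a b <= RInt f a' b'.
Proof.
  intros H0 Ha Hab Hb.
  rewrite <- (RInt_Chasles f a' a b') by (apply ex_RInt_pos; lra).
  rewrite <- (RInt_Chasles f a b b') by (apply ex_RInt_pos; lra).
  assert (0 <= RInt f a' a).
  { apply RInt_ge_0; [lra | apply ex_RInt_pos; lra | intros; apply f_ge0; lra]. }
  assert (0 <= RInt f b b').
  { apply RInt_ge_0; [lra | apply ex_RInt_pos; lra | intros; apply f_ge0; lra]. }
  change (RInt f a b <= RInt f a' a + (RInt f a b + RInt f b b')). lra.
Qed.

Lemma RInt_le_is_RInt_gen l a b : is_RInt_0_oo f l -> 0 < a -> a <= b ->
  RInt f a b <= l.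
Proof.
  intros Hf Ha Hab.
  destruct (Rle_or_lt (RInt f a b) l) as [| Hlt]; [assumption |].
  destruct (is_RInt_gen_approx f l Hf (mkposreal _ (proj2 (Rlt_0_minus _ _) Hlt)) a b Ha)
    as [a' [b' [Ha' [Hb' Happrox]]]].
  assert (RInt f a b <= RInt f a' b') by (apply RInt_le_widen; lra).
  simpl in Happrox. apply Rabs_def2 in Happrox. lra.
Qed.

(* Monotone convergence: the integral is the supremum of the partial integrals. *)
Lemma ex_is_RInt_gen_bounded B :
  (forall a b, 0 < a -> a <= b -> RInt f a b <= B) -> exists l : R, is_RInt_0_oo f l.
Proof.
  intros HB.
  set (E := fun r => exists a b, 0 < a /\ a <= b /\ r = RInt f a b).
  assert (HEb : bound E) by (exists B; intros r (a & b & Ha & Hab & ->); auto).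
  assert (HEne : exists r, E r) by (exists (RInt f 1 1), 1, 1; lra).
  destruct (completeness E HEb HEne) as [l [Hub Hlub]].
  exists l. intros P [eps HP].
  assert (Hclose : exists r, E r /\ l - eps < r).
  { apply NNPP. intros Hno.
    assert (l <= l - eps).
    { apply Hlub. intros r Er. apply Rnot_lt_le. intros Hr. apply Hno. now exists r. }
    pose proof (cond_pos eps). lra. }
  destruct Hclose as [r [(a0 & b0 & Ha0 & Hab0 & ->) Hr]].
  apply Filter_prod with (fun a => 0 < a < a0) (fun b => b0 < b).
  - exists (mkposreal a0 Ha0). intros u Hu Hu0.
    change (Rabs (u - 0) < a0) in Hu. rewrite Rminus_0_r, Rabs_pos_eq in Hu; lra.
  - now exists b0.
  - intros a b Ha Hb. exists (RInt f a b). split.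
    + apply (RInt_correct (V := R_CompleteNormedModule)), ex_RInt_pos; lra.
    + apply HP. change (Rabs (RInt f a b - l) < eps).
      assert (RInt f a0 b0 <= RInt f a b) by (apply RInt_le_widen; lra).
      assert (RInt f a b <= l) by (apply Hub; exists a, b; repeat split; lra).
      rewrite Rabs_left1; lra.
Qed.

Lemma is_RInt_gen_gt0 l t0 : is_RInt_0_oo f l -> 0 < t0 -> 0 < f t0 -> 0 < l.
Proof.
  intros Hf Ht0 Hft0.
  destruct (f_cont t0 Ht0 (ball (f t0) (mkposreal (f t0 / 2) ltac:(lra))) (locally_ball _ _))
    as [d Hd].
  set (e := Rmin d t0 / 2).
  assert (0 < Rmin d t0) by (apply Rmin_glb_lt; [apply cond_pos | lra]).
  pose proof (Rmin_l d t0). pose proof (Rmin_r d t0).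
  assert (Hhalf : forall s, t0 - e <= s <= t0 + e -> f t0 / 2 <= f s).
  { intros s Hs. assert (Hb : ball t0 d s).
    { change (Rabs (s - t0) < d). apply Rabs_def1; unfold e in *; lra. }
    specialize (Hd s Hb). change (Rabs (f s - f t0) < f t0 / 2) in Hd.
    apply Rabs_def2 in Hd. lra. }
  assert (Hint : RInt (fun _ => f t0 / 2) (t0 - e) (t0 + e) <= RInt f (t0 - e) (t0 + e)).
  { apply RInt_le; [unfold e; lra | apply ex_RInt_const | apply ex_RInt_pos; unfold e; lra |].
    intros s Hs. apply Hhalf. lra. }
  rewrite RInt_const in Hint. change (scal ?u ?v) with (u * v) in Hint.
  assert (RInt f (t0 - e) (t0 + e) <= l)
    by (apply RInt_le_is_RInt_gen; [exact Hf | unfold e; lra ..]).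
  assert (0 < (t0 + e - (t0 - e)) * (f t0 / 2)) by (apply Rmult_lt_0_compat; unfold e; lra).
  lra.
Qed.

End NonnegativeIntegrand.

Definition gamma_weight (y lam t : R) : R := Rpower t (y - 1) * exp (- (lam * t)).

Lemma gamma_weight_gt0 y lam t : 0 < gamma_weight y lam t.
Proof. apply Rmult_lt_0_compat; apply exp_pos. Qed.

Lemma gamma_weight_continuous y lam t : 0 < t -> continuous (gamma_weight y lam) t.
Proof.
  intros Ht. apply (ex_derive_continuous (K := R_AbsRing) (V := R_NormedModule)).
  unfold gamma_weight, Rpower. auto_derive. lra.
Qed.

Lemma Rpower_pred_mul t y : 0 < t -> Rpower t (y - 1) * t = Rpower t y.
Proof.
  intros Ht. rewrite <- (Rpower_1 t) at 2 by assumption.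
  rewrite <- Rpower_plus. f_equal. ring.
Qed.

Lemma gamma_weight_scale y lam t : 0 < lam -> 0 < t ->
  lam * gamma_weight y 1 (lam * t) = Rpower lam y * gamma_weight y lam t.
Proof.
  intros Hlam Ht. unfold gamma_weight.
  rewrite <- Rpower_mult_distr, Rmult_1_l by assumption.
  rewrite <- (Rpower_pred_mul lam y) by assumption. ring.
Qed.

Lemma exp_le x y : x <= y -> exp x <= exp y.
Proof.
  intros [Hlt | ->]; [apply Rlt_le, exp_increasing, Hlt | apply Rle_refl].
Qed.

Lemma ln_le_sub1 u : 0 < u -> ln u <= u - 1.
Proof. intros Hu. pose proof (exp_ineq1_le (ln u)). rewrite exp_ln in * by assumption. lra. Qed.

Lemma filterlim_exp_m_infty {T} (F : (T -> Prop) -> Prop) (phi : T -> R) :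
  filterlim phi F (Rbar_locally m_infty) -> filterlim (fun t => exp (phi t)) F (locally 0).
Proof. intros H. exact (filterlim_comp _ _ _ phi exp _ _ _ H is_lim_exp_m). Qed.

Section GammaFunction.

Variable y : R.
Hypothesis y_gt0 : 0 < y.

Let K := y * (ln (2 * y) - 1).

Lemma y_ln_sub_id_le t : 0 < t -> y * ln t - t <= K - t / 2.
Proof.
  intros Ht. unfold K.
  assert (Hq : 0 < t / (2 * y)) by (apply Rdiv_lt_0_compat; lra).
  pose proof (ln_le_sub1 _ Hq) as Hln. rewrite ln_div in Hln by lra.
  apply (Rmult_le_compat_l y) in Hln; [| lra].
  replace (y * (t / (2 * y) - 1)) with (t / 2 - y) in Hln by (field; lra). lra.
Qed.

Lemma RInt_gamma_weight_le_0_1 a : 0 < a -> a <= 1 ->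
  RInt (gamma_weight y 1) a 1 <= 1 / y.
Proof.
  intros Ha Ha1.
  assert (Hprim : is_RInt (fun t => Rpower t (y - 1)) a 1
                    (minus (Rpower 1 y / y) (Rpower a y / y))).
  { apply (is_RInt_derive (fun t => Rpower t y / y)).
    - intros t Ht. rewrite Rmin_left, Rmax_right in Ht by lra.
      unfold Rpower. auto_derive; [lra |].
      change (exp ((y - 1) * ln t)) with (Rpower t (y - 1)).
      change (exp (y * ln t)) with (Rpower t y). rewrite <- (Rpower_pred_mul t y) by lra.
      field. split; lra.
    - intros t Ht. rewrite Rmin_left, Rmax_right in Ht by lra.
      apply (ex_derive_continuous (K := R_AbsRing) (V := R_NormedModule)).
      unfold Rpower. auto_derive. lra. }
  apply Rle_trans with (RInt (fun t => Rpower t (y - 1)) a 1).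
  - apply RInt_le; [assumption | apply ex_RInt_pos; [apply gamma_weight_continuous | lra ..] | |].
    + eexists; exact Hprim.
    + intros t Ht. unfold gamma_weight. rewrite <- (Rmult_1_r (Rpower t (y - 1))) at 2.
      apply Rmult_le_compat_l; [apply Rlt_le, exp_pos |].
      rewrite <- exp_0 at 2. apply exp_le. lra.
  - rewrite (is_RInt_unique _ _ _ _ Hprim). change (minus ?u ?v) with (u - v).
    unfold Rpower at 1. rewrite ln_1, Rmult_0_r, exp_0.
    assert (0 < Rpower a y / y) by (apply Rdiv_lt_0_compat; [apply exp_pos | lra]). lra.
Qed.

Lemma RInt_gamma_weight_le_1 b : 1 <= b -> RInt (gamma_weight y 1) 1 b <= 2 * exp K.
Proof.
  intros Hb.
  assert (Hprim : is_RInt (fun t => exp K * exp (- (t / 2))) 1 b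
                    (minus (- 2 * exp K * exp (- (b / 2))) (- 2 * exp K * exp (- (1 / 2))))).
  { apply (is_RInt_derive (fun t => - 2 * exp K * exp (- (t / 2)))).
    - intros t _. auto_derive; [trivial | unfold Rdiv; field].
    - intros t _. apply (ex_derive_continuous (K := R_AbsRing) (V := R_NormedModule)).
      auto_derive. trivial. }
  apply Rle_trans with (RInt (fun t => exp K * exp (- (t / 2))) 1 b).
  - apply RInt_le; [assumption | apply ex_RInt_pos; [apply gamma_weight_continuous | lra ..] | |].
    + eexists; exact Hprim.
    + intros t Ht. unfold gamma_weight, Rpower. rewrite <- !exp_plus. apply exp_le.
      assert (0 <= ln t) by (rewrite <- ln_1; apply ln_le; lra).
      pose proof (y_ln_sub_id_le t ltac:(lra)). nra.
  - rewrite (is_RInt_unique _ _ _ _ Hprim). change (minus ?u ?v) with (u - v).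
    assert (exp (- (1 / 2)) <= 1) by (rewrite <- exp_0 at 2; apply exp_le; lra).
    pose proof (exp_pos K). pose proof (exp_pos (- (b / 2))). nra.
Qed.

Lemma RInt_gamma_weight_le a b : 0 < a -> a <= b ->
  RInt (gamma_weight y 1) a b <= 1 / y + 2 * exp K.
Proof.
  intros Ha Hab.
  pose proof (Rmin_l a 1). pose proof (Rmin_r a 1).
  pose proof (Rmax_l b 1). pose proof (Rmax_r b 1).
  assert (0 < Rmin a 1) by (apply Rmin_glb_lt; lra).
  pose proof (gamma_weight_continuous y 1) as Hcont.
  apply Rle_trans with (RInt (gamma_weight y 1) (Rmin a 1) (Rmax b 1)).
  - apply RInt_le_widen; [assumption | intros t _; apply Rlt_le, gamma_weight_gt0 | lra ..].
  - rewrite <- (RInt_Chasles _ (Rmin a 1) 1) by (apply ex_RInt_pos; [assumption | lra ..]).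
    change (plus ?u ?v) with (u + v).
    pose proof (RInt_gamma_weight_le_0_1 (Rmin a 1) ltac:(assumption) ltac:(assumption)).
    pose proof (RInt_gamma_weight_le_1 (Rmax b 1) ltac:(assumption)). lra.
Qed.

Lemma is_RInt_gen_Gamma : is_RInt_0_oo (gamma_weight y 1) (Gamma y).
Proof.
  destruct (ex_is_RInt_gen_bounded (gamma_weight y 1) (gamma_weight_continuous y 1)
              (fun t _ => Rlt_le _ _ (gamma_weight_gt0 y 1 t)) _ RInt_gamma_weight_le)
    as [l Hl].
  replace (Gamma y) with l; [exact Hl |].
  assert (Hl' : is_RInt_0_oo (fun t => Rpower t (y - 1) * exp (- t)) l).
  { apply (is_RInt_gen_ext_pos (gamma_weight y 1)); [| exact Hl].
    intros t _. unfold gamma_weight. now rewrite Rmult_1_l. }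
  unfold Gamma. symmetry. exact (is_RInt_gen_unique _ _ Hl').
Qed.

Lemma Gamma_gt0 : 0 < Gamma y.
Proof.
  apply (is_RInt_gen_gt0 (gamma_weight y 1) (gamma_weight_continuous y 1)
           (fun t _ => Rlt_le _ _ (gamma_weight_gt0 y 1 t)) _ 1 is_RInt_gen_Gamma Rlt_0_1).
  apply gamma_weight_gt0.
Qed.

Let mean_primitive t := exp (y * ln t - t).

Lemma is_derive_mean_primitive t : 0 < t ->
  is_derive mean_primitive t ((y - t) * gamma_weight y 1 t).
Proof.
  intros Ht. unfold mean_primitive. auto_derive; [lra |].
  unfold gamma_weight, Rpower.
  replace (y * ln t + - t) with ((y - 1) * ln t + - (1 * t) + ln t) by ring.
  rewrite !exp_plus, exp_ln by lra. field. lra.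
Qed.

Lemma mean_primitive_lim_0 : filterlim mean_primitive (at_right 0) (locally 0).
Proof.
  apply filterlim_exp_m_infty. intros P [N HN].
  assert (Hln : at_right 0 (fun t => ln t < N / y)).
  { apply (is_lim_ln_0 (fun u => u < N / y)). now exists (N / y). }
  destruct Hln as [d Hd]. exists d. intros t Ht Ht0. apply HN.
  specialize (Hd t Ht Ht0). apply (Rmult_lt_compat_l y) in Hd; [| lra].
  replace (y * (N / y)) with N in Hd by (field; lra). lra.
Qed.

Lemma mean_primitive_lim_infty : filterlim mean_primitive (Rbar_locally p_infty) (locally 0).
Proof.
  apply filterlim_exp_m_infty. intros P [N HN].
  exists (Rmax 0 (2 * (K - N))). intros t Ht. apply HN.
  pose proof (Rmax_l 0 (2 * (K - N))). pose proof (Rmax_r 0 (2 * (K - N))).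
  pose proof (y_ln_sub_id_le t ltac:(lra)). lra.
Qed.

Lemma is_RInt_gen_gamma_mean : is_RInt_0_oo (fun t => (y - t) * gamma_weight y 1 t) 0.
Proof.
  assert (HD : forall t, 0 < t -> Derive mean_primitive t = (y - t) * gamma_weight y 1 t).
  { intros t Ht. apply is_derive_unique, is_derive_mean_primitive, Ht. }
  assert (HDcont : forall t, 0 < t -> continuous (Derive mean_primitive) t).
  { intros t Ht. apply (continuous_ext_loc _ (fun s => (y - s) * gamma_weight y 1 s)).
    - exists (mkposreal (t / 2) ltac:(lra)). intros s Hs.
      change (Rabs (s - t) < t / 2) in Hs. apply Rabs_def2 in Hs.
      symmetry. apply HD. lra.
    - apply (ex_derive_continuous (K := R_AbsRing) (V := R_NormedModule)).
      unfold gamma_weight, Rpower. auto_derive. lra. }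
  pose proof (is_RInt_gen_Derive mean_primitive 0 0
    (eventually_between_pos _ (fun t Ht => ex_intro _ _ (is_derive_mean_primitive t Ht)))
    (eventually_between_pos _ HDcont) mean_primitive_lim_0 mean_primitive_lim_infty) as H.
  rewrite Rminus_0_r in H. exact (is_RInt_gen_ext_pos _ _ _ HD H).
Qed.

End GammaFunction.

Lemma is_RInt_gen_gamma_weight y lam : 0 < y -> 0 < lam ->
  is_RInt_0_oo (gamma_weight y lam) (Gamma y / Rpower lam y).
Proof.
  intros Hy Hlam.
  assert (HP : 0 < Rpower lam y) by apply exp_pos.
  pose proof (is_RInt_gen_mult_l _ (/ Rpower lam y) _
                (is_RInt_gen_scale _ _ lam Hlam (is_RInt_gen_Gamma y Hy))) as H.
  rewrite Rmult_comm in H.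
  refine (is_RInt_gen_ext_pos _ _ _ _ H). intros t Ht.
  rewrite gamma_weight_scale by assumption. field. lra.
Qed.

Lemma is_RInt_gen_gamma_weight_mean y x : 0 < y -> 0 < x ->
  is_RInt_0_oo (fun t => (x - t) * gamma_weight y (y / x) t) 0.
Proof.
  intros Hy Hx.
  set (lam := y / x).
  assert (Hlam : 0 < lam) by (apply Rdiv_lt_0_compat; assumption).
  assert (HP : 0 < Rpower lam y) by apply exp_pos.
  pose proof (is_RInt_gen_mult_l _ (/ (lam * Rpower lam y)) _
                (is_RInt_gen_scale _ _ lam Hlam (is_RInt_gen_gamma_mean y Hy))) as H.
  rewrite Rmult_0_r in H.
  refine (is_RInt_gen_ext_pos _ _ _ _ H). intros t Ht.
  pose proof (gamma_weight_scale y lam t Hlam Ht) as Hscale.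
  replace (gamma_weight y 1 (lam * t)) with (Rpower lam y * gamma_weight y lam t / lam)
    by (rewrite <- Hscale; field; lra).
  unfold lam in *. field. repeat split; lra.
Qed.

Section StrictJensen.

Variables (w phi : R -> R) (x c J M : R).
Hypothesis w_cont : forall t, 0 < t -> continuous w t.
Hypothesis w_gt0 : forall t, 0 < t -> 0 < w t.
Hypothesis w_mass : is_RInt_0_oo w J.
Hypothesis phi_cont : forall t, 0 < t -> continuous phi t.

Lemma continuous_mul_weight (h : R -> R) t : 0 < t -> continuous h t ->
  continuous (fun s => h s * w s) t.
Proof. intros Ht Hh. apply (continuous_mult (K := R_AbsRing)); [exact Hh | apply w_cont, Ht]. Qed.

Hypothesis phi_bounded : forall t, 0 < t -> 0 <= phi t <= M.

Lemma ex_is_RInt_gen_mul_bounded : exists I : R, is_RInt_0_oo (fun t => phi t * w t) I.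
Proof.
  assert (HMw : is_RInt_0_oo (fun t => M * w t) (M * J)) by now apply is_RInt_gen_mult_l.
  assert (HM : 0 <= M) by (pose proof (phi_bounded 1 Rlt_0_1); lra).
  apply (ex_is_RInt_gen_bounded _ (fun t Ht => continuous_mul_weight phi t Ht (phi_cont t Ht))
           (fun t Ht => Rmult_le_pos _ _ (proj1 (phi_bounded t Ht)) (Rlt_le _ _ (w_gt0 t Ht)))
           (M * J)).
  intros a b Ha Hab.
  apply Rle_trans with (RInt (fun t => M * w t) a b).
  - apply RInt_le; [assumption | apply ex_RInt_pos; [| lra ..] | apply ex_RInt_pos; [| lra ..] |].
    + intros t Ht. apply continuous_mul_weight, phi_cont; assumption.
    + intros t Ht. apply continuous_mul_weight; [assumption | apply continuous_const].
    + intros t Ht. apply Rmult_le_compat_r; [apply Rlt_le, w_gt0 | apply phi_bounded]; lra.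
  - apply (RInt_le_is_RInt_gen (fun t => M * w t)); try assumption.
    + intros t Ht. apply continuous_mul_weight; [assumption | apply continuous_const].
    + intros t Ht. apply Rmult_le_pos; [assumption | apply Rlt_le, w_gt0, Ht].
Qed.

Hypothesis w_mean : is_RInt_0_oo (fun t => (x - t) * w t) 0.
Hypothesis phi_above_tangent : forall t, 0 < t -> phi x + c * (t - x) <= phi t.
Hypothesis phi_not_affine : exists t, 0 < t /\ phi t <> phi x + c * (t - x).

Lemma jensen_strict (I : R) : is_RInt_0_oo (fun t => phi t * w t) I -> phi x * J < I.
Proof.
  intros HI.
  set (tangent_gap := fun t => phi t - (phi x + c * (t - x))).
  assert (Hgap : is_RInt_0_oo (fun t => tangent_gap t * w t) (I + - phi x * J + c * 0)).
  { pose proof (is_RInt_gen_Rplus _ _ _ _ HI (is_RInt_gen_mult_l _ (- phi x) _ w_mass)) as H1.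
    pose proof (is_RInt_gen_mult_l _ c _ w_mean) as H2.
    refine (is_RInt_gen_ext_pos _ _ _ _ (is_RInt_gen_Rplus _ _ _ _ H1 H2)).
    intros t _. unfold tangent_gap. ring. }
  replace (I + - phi x * J + c * 0) with (I - phi x * J) in Hgap by ring.
  destruct phi_not_affine as [t0 [Ht0 Hne]].
  assert (0 < I - phi x * J); [| lra].
  refine (is_RInt_gen_gt0 _ _ _ _ t0 Hgap Ht0 _).
  - intros t Ht. apply continuous_mul_weight; [assumption |].
    apply (continuous_minus (V := R_NormedModule) phi); [apply phi_cont, Ht |].
    apply (continuous_plus (V := R_NormedModule)); [apply continuous_const |].
    apply (continuous_mult (K := R_AbsRing)); [apply continuous_const |].
    apply (continuous_minus (V := R_NormedModule)); [apply continuous_id | apply continuous_const].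
  - intros t Ht. apply Rmult_le_pos; [| apply Rlt_le, w_gt0, Ht].
    unfold tangent_gap. pose proof (phi_above_tangent t Ht). lra.
  - apply Rmult_lt_0_compat; [| apply w_gt0, Ht0].
    unfold tangent_gap. pose proof (phi_above_tangent t0 Ht0). lra.
Qed.

End StrictJensen.

Section CompletelyMonotonic.

Variable g : R -> R.
Hypothesis g_cm : completely_monotonic g.

Lemma cm_ge0 t : 0 < t -> 0 <= g t.
Proof. intros Ht. destruct (g_cm 0%nat t Ht) as [_ H]. simpl in H. lra. Qed.

Lemma cm_ex_derive t : 0 < t -> ex_derive g t.
Proof. intros Ht. exact (proj1 (g_cm 1%nat t Ht)). Qed.

Lemma cm_continuous t : 0 < t -> continuous g t.
Proof.
  intros Ht. apply (ex_derive_continuous (K := R_AbsRing) (V := R_NormedModule)).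
  now apply cm_ex_derive.
Qed.

Lemma cm_ex_derive2 t : 0 < t -> ex_derive (Derive g) t.
Proof. intros Ht. exact (proj1 (g_cm 2%nat t Ht)). Qed.

Lemma cm_Derive_le u v : 0 < u -> u <= v -> Derive g u <= Derive g v.
Proof.
  intros Hu Huv.
  destruct (MVT_gen (Derive g) u v (Derive (Derive g))) as [s [Hs Hmvt]].
  - intros t Ht. rewrite Rmin_left, Rmax_right in Ht by lra.
    apply Derive_correct, cm_ex_derive2. lra.
  - intros t Ht. rewrite Rmin_left in Ht by lra.
    apply continuity_pt_filterlim, (ex_derive_continuous (K := R_AbsRing) (V := R_NormedModule)).
    apply cm_ex_derive2. lra.
  - rewrite Rmin_left, Rmax_right in Hs by lra.
    destruct (g_cm 2%nat s ltac:(lra)) as [_ H2].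
    change (0 <= (-1) ^ 2 * Derive (Derive g) s) in H2. simpl in H2. nra.
Qed.

Lemma cm_tangent_le x t : 0 < x -> 0 < t -> g x + Derive g x * (t - x) <= g t.
Proof.
  intros Hx Ht.
  assert (Hm : 0 < Rmin x t) by now apply Rmin_glb_lt.
  destruct (MVT_gen g x t (Derive g)) as [s [Hs Hmvt]].
  - intros r Hr. apply Derive_correct, cm_ex_derive. lra.
  - intros r Hr. apply continuity_pt_filterlim, cm_continuous. lra.
  - destruct (Rle_or_lt x t) as [Hxt | Htx].
    + rewrite Rmin_left, Rmax_right in Hs by lra.
      assert (Derive g x <= Derive g s) by (apply cm_Derive_le; lra). nra.
    + rewrite Rmin_right, Rmax_left in Hs by lra.
      assert (Derive g s <= Derive g x) by (apply cm_Derive_le; lra). nra.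
Qed.

End CompletelyMonotonic.

Lemma nonconstant_not_affine (g : R -> R) x c : 0 < x ->
  bounded_on_pos g -> nonconstant_on_pos g ->
  exists t, 0 < t /\ g t <> g x + c * (t - x).
Proof.
  intros Hx [M HM] (a & b & Ha & Hb & Hab).
  apply NNPP. intros Hno.
  assert (Haff : forall t, 0 < t -> g t = g x + c * (t - x)).
  { intros t Ht. apply NNPP. intros Hne. apply Hno. now exists t. }
  pose proof (proj1 (Rabs_le_between _ _) (HM x Hx)) as Hgx.
  destruct (Rtotal_order c 0) as [Hc | [-> | Hc]].
  - set (t := x + (2 * M + 1) / - c).
    assert (Hq : 0 < (2 * M + 1) / - c) by (apply Rdiv_lt_0_compat; lra).
    assert (Ht : 0 < t) by (unfold t; lra).
    pose proof (proj1 (Rabs_le_between _ _) (HM t Ht)) as Hgt.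
    rewrite (Haff t Ht) in Hgt. unfold t in Hgt.
    replace (c * (x + (2 * M + 1) / - c - x)) with (- (2 * M + 1)) in Hgt by (field; lra).
    lra.
  - apply Hab. rewrite (Haff a), (Haff b) by assumption. ring.
  - set (t := x + (2 * M + 1) / c).
    assert (Hq : 0 < (2 * M + 1) / c) by (apply Rdiv_lt_0_compat; lra).
    assert (Ht : 0 < t) by (unfold t; lra).
    pose proof (proj1 (Rabs_le_between _ _) (HM t Ht)) as Hgt.
    rewrite (Haff t Ht) in Hgt. unfold t in Hgt.
    replace (c * (x + (2 * M + 1) / c - x)) with (2 * M + 1) in Hgt by (field; lra).
    lra.
Qed.

Theorem corollary2p6 (g : R -> R) :
  completely_monotonic g -> bounded_on_pos g -> nonconstant_on_pos g ->
  forall x y : R, 0 < x -> 0 < y ->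
    exists I : R,
      is_RInt_gen (fun t => g t * Rpower t (y - 1) * exp (- (t * y / x)))
        (at_right 0) (Rbar_locally p_infty) I /\
      g x < Rpower (y / x) y / Gamma y * I.
Proof.
  intros Hcm Hbd Hnc x y Hx Hy.
  set (lam := y / x).
  assert (Hlam : 0 < lam) by (apply Rdiv_lt_0_compat; assumption).
  pose proof (is_RInt_gen_gamma_weight y lam Hy Hlam) as Hmass.
  pose proof (is_RInt_gen_gamma_weight_mean y x Hy Hx) as Hmean.
  pose proof (gamma_weight_continuous y lam) as Hw_cont.
  assert (Hw_gt0 : forall t, 0 < t -> 0 < gamma_weight y lam t) by (intros; apply gamma_weight_gt0).
  pose proof (cm_continuous g Hcm) as Hg_cont.
  destruct Hbd as [M HM].
  assert (Hg_bounds : forall t, 0 < t -> 0 <= g t <= M).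
  { intros t Ht. split; [apply cm_ge0; assumption |].
    apply Rle_trans with (Rabs (g t)); [apply Rle_abs | apply HM, Ht]. }
  destruct (ex_is_RInt_gen_mul_bounded _ g _ M Hw_cont Hw_gt0 Hmass Hg_cont Hg_bounds) as [I HI].
  exists I. split.
  - refine (is_RInt_gen_ext_pos _ _ _ _ HI). intros t _.
    unfold gamma_weight, lam. replace (t * y / x) with (y / x * t) by (field; lra). ring.
  - pose proof (jensen_strict _ g x (Derive g x) _ Hw_cont Hw_gt0 Hmass Hg_cont Hmean
                  (fun t => cm_tangent_le g Hcm x t Hx)
                  (nonconstant_not_affine g x (Derive g x) Hx (ex_intro _ M HM) Hnc) I HI)
      as Hjensen.
    assert (HJ : 0 < Gamma y / Rpower lam y)
      by (apply Rdiv_lt_0_compat; [apply Gamma_gt0, Hy | apply exp_pos]).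
    apply (Rmult_lt_reg_r (Gamma y / Rpower lam y)); [exact HJ |].
    replace (Rpower lam y / Gamma y * I * (Gamma y / Rpower lam y)) with I
      by (field; split; apply Rgt_not_eq; [apply exp_pos | apply Gamma_gt0, Hy]).
    exact Hjensen.
Qed.
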